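(* Let $f,g:\mathbb{R}\to\mathbb{R}$ be $\mathcal{C}^2$ functions such that $f''(u)\ge c_0$ and $g''(u)\ge c_0$ for some $c_0>0$ and all $u\in\mathbb{R}$, and $f(u)>g(u)$ for all $u\in\mathbb{R}$. Let $u^->u^+$ and $\theta^-,\theta^+\in\{0,1\}$ with $\theta^-\neq\theta^+$, and let $$\lambda=\frac{[\theta^+f(u^+)+(1-\theta^+)g(u^+)]-[\theta^-f(u^-)+(1-\theta^-)g(u^-)]}{u^+-u^-}.$$ Then the jump satisfies the Lax admissibility conditions $$\theta^+f'(u^+)+(1-\theta^+)g'(u^+)\;\le\;\lambda\;\le\;\theta^-f'(u^-)+(1-\theta^-)g'(u^-)$$ in each of the following two cases: (1) $\theta^-=1$, $\theta^+=0$ and $u^-\ge u^*$, where $(u^*,f(u^* ))$ is the unique point with $u^*>u^+$ at which a straight line through $(u^+,g(u^+))$ touches the graph of $f$ tangentially; (2) $\theta^-=0$, $\theta^+=1$ and $u^+\le v^*$, where $(v^*,f(v^* ))$ is the unique point with $v^*<u^-$ at which a straight line through $(u^-,g(u^-))$ touches the graph of $f$ tangentially.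
   Context: This concerns jumps of weak solutions of the conservation law $u_t+[\theta(u_x)f(u)+(1-\theta(u_x))g(u)]_x=0$, where $\theta(s)=1$ for $s>0$ and $\theta(s)=0$ for $s<0$. A jump connects a left state $(u^-,\theta^-)$ to a right state $(u^+,\theta^+)$, traveling with the Rankine–Hugoniot speed $\lambda$ given in the claim. *)

From Stdlib Require Import Reals.
Open Scope R_scope.

Definition C2_with (f f1 f2 : R -> R) : Prop :=
  (forall x, derivable_pt_lim f x (f1 x)) /\
  (forall x, derivable_pt_lim f1 x (f2 x)) /\
  (forall x, continuity_pt f2 x).

Definition flux (th : R) (f g : R -> R) (u : R) : R :=
  th * f u + (1 - th) * g u.

(* The straight line through (a, b) touches the graph of f (with derivative f1)
   tangentially at the point (p, f p): the tangent line of f at p passes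
   through (a, b). *)
Definition tangent_through (f f1 : R -> R) (a b p : R) : Prop :=
  b = f p + f1 p * (a - p).

(** For a convex f, the value at u of the tangent line of f at p,
    f p + f' p (u - p), has derivative f'' p (u - p) in p, so it decreases as
    p moves away from u.  In case (1) it equals g(u+) at p = u* when u = u+,
    so the tangent of f at u- >= u* passes below (u+, g(u+)), which is
    lambda <= f'(u-); case (2) is symmetric.  The remaining inequality comes
    from g lying above its tangent at one end of the jump and below f at the
    other. *)

From Stdlib Require Import Reals Lra Psatz.
Open Scope R_scope.

Lemma flux0 (f g : R -> R) (u : R) : flux 0 f g u = g u.
Proof. unfold flux; ring. Qed.

Lemma flux1 (f g : R -> R) (u : R) : flux 1 f g u = f u.
Proof. unfold flux; ring. Qed.

Lemma le_of_derivative_nonneg (F F' : R -> R) (a b : R) :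
  a <= b ->
  (forall c, a <= c <= b -> derivable_pt_lim F c (F' c)) ->
  (forall c, a <= c <= b -> 0 <= F' c) ->
  F a <= F b.
Proof.
  intros Hab HF HF'.
  destruct (Req_dec a b) as [<- | Hne]; [lra |].
  destruct (MVT_cor2 F F' a b) as [c [Hdiff Hc]]; [lra | intros; apply HF; lra |].
  assert (0 <= F' c) by (apply HF'; lra).
  nra.
Qed.

Definition tangent_value (F F1 : R -> R) (p x : R) : R := F p + F1 p * (x - p).

Section TangentLines.

Variables F F1 F2 : R -> R.
Hypothesis HF : forall x, derivable_pt_lim F x (F1 x).
Hypothesis HF1 : forall x, derivable_pt_lim F1 x (F2 x).
Hypothesis HF2 : forall x, 0 <= F2 x.

Lemma derivable_pt_lim_tangent_value (x p : R) :
  derivable_pt_lim (fun q => tangent_value F F1 q x) p (F2 p * (x - p)).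
Proof.
  unfold tangent_value.
  replace (F2 p * (x - p)) with (F1 p + (F2 p * (x - p) + F1 p * (0 - 1))) by ring.
  apply derivable_pt_lim_plus; [apply HF |].
  apply (derivable_pt_lim_mult F1 (fun q => x - q)); [apply HF1 |].
  apply (derivable_pt_lim_minus (fun _ => x) id).
  - apply derivable_pt_lim_const.
  - apply derivable_pt_lim_id.
Qed.

Lemma tangent_value_le_left (x p q : R) :
  p <= q <= x -> tangent_value F F1 p x <= tangent_value F F1 q x.
Proof.
  intros Hpqx.
  apply (le_of_derivative_nonneg (fun r => tangent_value F F1 r x)
           (fun r => F2 r * (x - r))); [lra | |].
  - intros c _; apply derivable_pt_lim_tangent_value.
  - intros c Hc; specialize (HF2 c); nra.
Qed.

Lemma tangent_value_ge_right (x p q : R) :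
  x <= p <= q -> tangent_value F F1 q x <= tangent_value F F1 p x.
Proof.
  intros Hxpq.
  enough (- tangent_value F F1 p x <= - tangent_value F F1 q x) by lra.
  apply (le_of_derivative_nonneg (fun r => - tangent_value F F1 r x)
           (fun r => - (F2 r * (x - r)))); [lra | |].
  - intros c _.
    apply (derivable_pt_lim_opp (fun r => tangent_value F F1 r x)).
    apply derivable_pt_lim_tangent_value.
  - intros c Hc; specialize (HF2 c); nra.
Qed.

Lemma tangent_value_le_graph (p x : R) : tangent_value F F1 p x <= F x.
Proof.
  replace (F x) with (tangent_value F F1 x x) by (unfold tangent_value; ring).
  destruct (Rle_dec p x).
  - apply tangent_value_le_left; lra.
  - apply tangent_value_ge_right; lra.
Qed.

End TangentLines.

Section LaxJumps.

Variables f f1 f2 g g1 g2 : R -> R.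
Hypothesis Hf : forall x, derivable_pt_lim f x (f1 x).
Hypothesis Hf1 : forall x, derivable_pt_lim f1 x (f2 x).
Hypothesis Hf2 : forall x, 0 <= f2 x.
Hypothesis Hg : forall x, derivable_pt_lim g x (g1 x).
Hypothesis Hg1 : forall x, derivable_pt_lim g1 x (g2 x).
Hypothesis Hg2 : forall x, 0 <= g2 x.
Hypothesis Hgf : forall u, g u <= f u.

Lemma lax_jump_f_to_g (up um us : R) :
  up < us -> us <= um -> tangent_through f f1 up (g up) us ->
  g1 up <= (g up - f um) / (up - um) <= f1 um.
Proof.
  intros Hus Husm Htan; unfold tangent_through in Htan.
  set (lam := (g up - f um) / (up - um)).
  assert (Hlam : lam * (um - up) = f um - g up) by (unfold lam; field; lra).
  assert (Hg_above := tangent_value_le_graph g g1 g2 Hg Hg1 Hg2 up um).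
  assert (Hf_tangent := tangent_value_ge_right f f1 f2 Hf Hf1 Hf2 up us um).
  assert (Hgf_um := Hgf um).
  unfold tangent_value in *.
  split; nra.
Qed.

Lemma lax_jump_g_to_f (up um vs : R) :
  up <= vs -> vs < um -> tangent_through f f1 um (g um) vs ->
  f1 up <= (f up - g um) / (up - um) <= g1 um.
Proof.
  intros Hvs Hvsm Htan; unfold tangent_through in Htan.
  set (lam := (f up - g um) / (up - um)).
  assert (Hlam : lam * (um - up) = g um - f up) by (unfold lam; field; lra).
  assert (Hg_above := tangent_value_le_graph g g1 g2 Hg Hg1 Hg2 um up).
  assert (Hf_tangent := tangent_value_le_left f f1 f2 Hf Hf1 Hf2 um up vs).
  assert (Hgf_up := Hgf up).
  unfold tangent_value in *.
  split; nra.
Qed.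

End LaxJumps.

Theorem lemma2p2 :
  forall (f f1 f2 g g1 g2 : R -> R) (c0 : R),
    C2_with f f1 f2 -> C2_with g g1 g2 ->
    0 < c0 ->
    (forall u, c0 <= f2 u) -> (forall u, c0 <= g2 u) ->
    (forall u, g u < f u) ->
    forall (um up thm thp : R),
      up < um ->
      (thm = 0 \/ thm = 1) -> (thp = 0 \/ thp = 1) -> thm <> thp ->
      let lam := (flux thp f g up - flux thm f g um) / (up - um) in
      (* case (1) *)
      (thm = 1 -> thp = 0 ->
        forall us, up < us -> tangent_through f f1 up (g up) us ->
        us <= um ->
        flux thp f1 g1 up <= lam <= flux thm f1 g1 um) /\
      (* case (2) *)
      (thm = 0 -> thp = 1 ->
        forall vs, vs < um -> tangent_through f f1 um (g um) vs ->
        up <= vs ->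
        flux thp f1 g1 up <= lam <= flux thm f1 g1 um).
Proof.
  intros f f1 f2 g g1 g2 c0 [Hf [Hf1 _]] [Hg [Hg1 _]] Hc0 Hfc Hgc Hgf
    um up thm thp Hup _ _ _ lam.
  assert (Hf2 : forall x, 0 <= f2 x) by (intro x; specialize (Hfc x); lra).
  assert (Hg2 : forall x, 0 <= g2 x) by (intro x; specialize (Hgc x); lra).
  assert (Hgf' : forall u, g u <= f u) by (intro u; apply Rlt_le, Hgf).
  unfold lam; split; intros -> ->; rewrite !flux0, !flux1.
  - intros us Hus Htan Husm.
    exact (lax_jump_f_to_g f f1 f2 g g1 g2 Hf Hf1 Hf2 Hg Hg1 Hg2 Hgf' up um us
             Hus Husm Htan).
  - intros vs Hvs Htan Hvsu.
    exact (lax_jump_g_to_f f f1 f2 g g1 g2 Hf Hf1 Hf2 Hg Hg1 Hg2 Hgf' up um vs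
             Hvsu Hvs Htan).
Qed.
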